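(* Let $G=(V,E)$ be a finite graph, $q\in\mathbb N$, $\beta\ge0$ and $p=1-e^{-\beta}$. Let $P_{\rm SW}$ be the transition matrix of the Swendsen--Wang dynamics for the $q$-state Potts model on $G$ at inverse temperature $\beta$, and $\tilde P_{\rm SW}$ that of the Swendsen--Wang dynamics for the random-cluster model on $G$ with parameters $p$ and $q$. Then $\lambda(P_{\rm SW})=\lambda(\tilde P_{\rm SW})$.
   Context: For $A\subseteq E$, $c(A)$ is the number of connected components of $(V,A)$; for $\sigma\in\{1,\dots,q\}^V$, $E(\sigma)$ is the set of edges whose endvertices have the same color. Potts measure $\pi(\sigma)=e^{\beta|E(\sigma)|}/Z$; RC measure $\mu(A)\propto(\tfrac{p}{1-p})^{|A|}q^{c(A)}$. $P_{\rm SW}(\sigma,\tau)=(1-p)^{|E(\sigma)|}\sum_{A\subseteq E(\sigma)\cap E(\tau)}(\tfrac{p}{1-p})^{|A|}q^{-c(A)}$ (reversible w.r.t. $\pi$); $\tilde P_{\rm SW}(A,B)=q^{-c(A)}(\tfrac{p}{1-p})^{|B|}\sum_{\sigma}(1-p)^{|E(\sigma)|}\mathbf 1(A\cup B\subseteq E(\sigma))$ (reversible w.r.t. $\mu$). Spectral gap: $\lambda(P)=1-\max\{|\xi|:\xi\text{ eigenvalue of }P,\ \xi\neq1\}$. *)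

From HB Require Import structures.
From mathcomp Require Import all_boot all_order all_algebra.
From mathcomp Require Import reals sequences exp.
From mathcomp Require Import complex.
Set Implicit Arguments. Unset Strict Implicit. Unset Printing Implicit Defensive.
Import Order.TTheory GRing.Theory Num.Theory.
Local Open Scope ring_scope.

Section Defs.
Variable R : realType.

Definition is_eigenvalue (S : finType) (P : S -> S -> R) (xi : R[i]) : Prop :=
  exists v : S -> R[i], (exists s, v s != 0) /\
    forall s, \sum_(t : S) ((P s t)%:C * v t)%C = (xi * v s)%C.

(* The max of this finite set of reals is taken as [sup]; for the empty set
   this is 0 (sup set0 = 0), i.e. lambda(P) = 1 when 1 is the only eigenvalue. *)
Definition spectral_gap (S : finType) (P : S -> S -> R) : R :=
  1 - sup (fun r : R => exists xi : R[i],
             [/\ is_eigenvalue P xi, xi != 1 & r = Normc.normc xi]).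

Variables (V E : finType) (eu ev : E -> V).

Definition simple_graph : Prop :=
  (forall e, eu e != ev e) /\
  (forall e f, [set eu e; ev e] = [set eu f; ev f] -> e = f).

Definition adjA (A : {set E}) : rel V :=
  fun x y => [exists e in A, ((eu e == x) && (ev e == y)) || ((eu e == y) && (ev e == x))].

Definition ncomp (A : {set E}) : nat :=
  #|[set [set y | connect (adjA A) x y] | x : V]|.

Definition mono_edges (q : nat) (sigma : {ffun V -> 'I_q}) : {set E} :=
  [set e | sigma (eu e) == sigma (ev e)].

Definition P_SW (q : nat) (p : R) (sigma tau : {ffun V -> 'I_q}) : R :=
  (1 - p) ^+ #|mono_edges sigma| *
  \sum_(A : {set E} | A \subset mono_edges sigma :&: mono_edges tau)
     (p / (1 - p)) ^+ #|A| * (q%:R ^- ncomp A).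

Definition P_SW_RC (q : nat) (p : R) (A B : {set E}) : R :=
  q%:R ^- ncomp A * (p / (1 - p)) ^+ #|B| *
  \sum_(sigma : {ffun V -> 'I_q})
     (1 - p) ^+ #|mono_edges sigma| * (A :|: B \subset mono_edges sigma)%:R.

End Defs.

(* Both Swendsen-Wang chains are obtained by composing the same two kernels in
   opposite orders: from spins to bond sets (keep each monochromatic edge with
   probability p) and from bond sets to spins (colour each cluster uniformly).
   Hence P_SW = T U and P~_SW = U T, and for any rectangular T, U the products
   T U and U T have the same nonzero eigenvalues: if T U v = xi v with xi <> 0,
   then U v is a nonzero eigenvector of U T for xi. Since the moduli entering
   the spectral gap are nonnegative, an eigenvalue 0 on either side does not
   change the supremum. *)
From HB Require Import structures.
From mathcomp Require Import all_boot all_order all_algebra.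
From mathcomp Require Import reals sequences exp.
From mathcomp Require Import complex.
From mathcomp Require Import boolp classical_sets.
Import Order.TTheory GRing.Theory Num.Theory.
Set Implicit Arguments. Unset Strict Implicit. Unset Printing Implicit Defensive.
Local Open Scope ring_scope.
Local Open Scope classical_set_scope.

Section KernelProduct.
Variable R : realType.

Definition kmul (S1 S2 S3 : finType) (T : S1 -> S2 -> R) (U : S2 -> S3 -> R) :
    S1 -> S3 -> R :=
  fun s t => \sum_k T s k * U k t.

Variables (S1 S2 : finType) (T : S1 -> S2 -> R) (U : S2 -> S1 -> R).

Lemma eigenvalue_kmulC (xi : R[i]) :
  xi != 0 -> is_eigenvalue (kmul T U) xi -> is_eigenvalue (kmul U T) xi.
Proof.
move=> xi_neq0 [v [[s0 vs0_neq0] Hv]].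
pose w k := \sum_t ((U k t)%:C * v t)%C.
have Tw s : \sum_k ((T s k)%:C%C * w k) = xi * v s.
  rewrite -Hv /w /kmul.
  under eq_bigr do rewrite mulr_sumr.
  under [RHS]eq_bigr do rewrite rmorph_sum mulr_suml.
  rewrite exchange_big; apply: eq_bigr => t _; apply: eq_bigr => k _.
  by rewrite rmorphM mulrA.
exists w; split.
  apply: contrapT => /forallNP w0.
  have := Tw s0; rewrite big1 => [|k _]; last first.
    by move/negP/negbNE/eqP: (w0 k) => ->; rewrite mulr0.
  by move/esym/eqP; rewrite mulf_eq0 (negbTE xi_neq0) (negbTE vs0_neq0).
move=> j; rewrite /kmul.
under eq_bigr do rewrite rmorph_sum mulr_suml.
rewrite exchange_big /=.
transitivity (\sum_s ((U j s)%:C%C * (xi * v s))).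
  apply: eq_bigr => s _; rewrite -Tw mulr_sumr; apply: eq_bigr => k _.
  by rewrite rmorphM mulrA.
by rewrite /w mulr_sumr; apply: eq_bigr => s _; rewrite mulrCA.
Qed.

End KernelProduct.

Section SpectralGap.
Variable R : realType.

Definition eigen_moduli (S : finType) (P : S -> S -> R) : set R :=
  fun r => exists xi : R[i], [/\ is_eigenvalue P xi, xi != 1 & r = Normc.normc xi].

Lemma eigen_moduli_ge0 (S : finType) (P : S -> S -> R) r :
  eigen_moduli P r -> 0 <= r.
Proof. by move=> [[a b] [_ _ ->]]; rewrite sqrtr_ge0. Qed.

Lemma sup_setU0 (A : set R) : (forall x, A x -> 0 <= x) -> sup ([set 0] `|` A) = sup A.
Proof.
move=> A_ge0; have [supA|nsupA] := pselect (has_sup A).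
  by apply: sup_setU => // _ b -> /A_ge0.
rewrite (sup_out nsupA); have [A0|A_empty] := pselect (A !=set0).
  apply: sup_out => -[_ [u ubu]]; apply: nsupA; split => //.
  by exists u => x Ax; apply: ubu; right.
have -> : A = set0 by apply/eqP/negPn/negP => /set0P/A_empty.
by rewrite setU0 sup1.
Qed.

Lemma spectral_gapE (S : finType) (P : S -> S -> R) :
  spectral_gap P = 1 - sup ([set 0] `|` eigen_moduli P).
Proof. by rewrite sup_setU0 //; apply: eigen_moduli_ge0. Qed.

Lemma eigen_moduli0_kmul_sub (S1 S2 : finType) (T : S1 -> S2 -> R) (U : S2 -> S1 -> R) :
  [set 0] `|` eigen_moduli (kmul T U) `<=` [set 0] `|` eigen_moduli (kmul U T).
Proof.
move=> _ [->|[xi [Hxi xi_neq1 ->]]]; first by left.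
have [->|xi_neq0] := eqVneq xi 0; first by left; rewrite Normc.normc0.
by right; exists xi; split => //; apply: eigenvalue_kmulC.
Qed.

Lemma spectral_gap_kmulC (S1 S2 : finType) (T : S1 -> S2 -> R) (U : S2 -> S1 -> R) :
  spectral_gap (kmul T U) = spectral_gap (kmul U T).
Proof.
rewrite !spectral_gapE; congr (1 - sup _).
by rewrite eqEsubset; split; apply: eigen_moduli0_kmul_sub.
Qed.

End SpectralGap.

Section SwendsenWangFactorization.
Variables (R : realType) (V E : finType) (eu ev : E -> V) (q : nat) (p : R).

Local Notation mono := (mono_edges eu ev).

Definition sw_bonds (sigma : {ffun V -> 'I_q}) (A : {set E}) : R :=
  (1 - p) ^+ #|mono sigma| * (p / (1 - p)) ^+ #|A| * (A \subset mono sigma)%:R.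

Definition sw_spins (A : {set E}) (sigma : {ffun V -> 'I_q}) : R :=
  q%:R ^- ncomp eu ev A * (A \subset mono sigma)%:R.

Lemma P_SW_kmul : P_SW eu ev p = kmul sw_bonds sw_spins.
Proof.
apply/funext => sigma; apply/funext => tau.
rewrite /P_SW /kmul big_mkcond mulr_sumr; apply: eq_bigr => A _.
rewrite /sw_bonds /sw_spins finset.subsetI.
case: (A \subset _); case: (A \subset _); rewrite /= ?mulr0 ?mul0r //.
by rewrite !mulr1 mulrA.
Qed.

Lemma P_SW_RC_kmul : P_SW_RC eu ev q p = kmul sw_spins sw_bonds.
Proof.
apply/funext => A; apply/funext => B.
rewrite /P_SW_RC /kmul mulr_sumr; apply: eq_bigr => sigma _.
rewrite /sw_bonds /sw_spins finset.subUset.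
case: (A \subset _); case: (B \subset _); rewrite /= ?mulr0 ?mul0r //.
by rewrite !mulr1 -mulrA (mulrC (_ ^+ #|B|)).
Qed.

End SwendsenWangFactorization.

(* The factorization is a formal identity of kernels, valid for every p
   (including p = 1, where p / (1 - p) is a junk value). *)
Theorem lemma2p6 (R : realType) (V E : finType) (eu ev : E -> V)
  (q : nat) (beta p : R) :
  simple_graph eu ev -> (0 < q)%N -> 0 <= beta -> p = 1 - expR (- beta) ->
  spectral_gap (fun sigma tau : {ffun V -> 'I_q} => P_SW eu ev p sigma tau) =
  spectral_gap (fun A B : {set E} => P_SW_RC eu ev q p A B).
Proof.
move=> _ _ _ _.
by rewrite P_SW_kmul P_SW_RC_kmul spectral_gap_kmulC.
Qed.
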